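(* Let $p$ be a prime and $a,b,c>0$ integers with $a,b\le p-1$ and $c\le b$. Assume either $a+b\le p-1$ or $c\le a+b-p+1$. Then $\gcd\big(f(a,b,c),f(a,b,c-1)\big)=1$ in $\overline{\mathbb{F}}_p[t]$.
   Context: For non-negative integers $a,b,c$, $f(a,b,c)\in\overline{\mathbb{F}}_p[t]$ is $f(a,b,c)=\sum_{i_2+i_3=c}\binom{a}{i_2}\binom{b}{i_3}t^{i_2}$ (binomial coefficients reduced mod $p$, $\binom{n}{i}=0$ for $i<0$ or $i>n$). *)

From HB Require Import structures.
From mathcomp Require Import all_boot all_order all_algebra.
Set Implicit Arguments. Unset Strict Implicit. Unset Printing Implicit Defensive.
Import GRing.Theory.
Local Open Scope ring_scope.

(* f(a,b,c) = sum_{i2 + i3 = c} C(a,i2) C(b,i3) t^{i2}, coefficients cast into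
   the field F (hence reduced mod its characteristic). 'C(n,k) = 0 for k > n. *)
Definition fpoly (F : fieldType) (a b c : nat) : {poly F} :=
  \sum_(i < c.+1) ('C(a, i) * 'C(b, c - i))%:R *: 'X^i.

(* f(a,b,n) is the coefficient of s^n in G = (1 + ts)^a (1 + s)^b.  Comparing
   coefficients in the logarithmic-derivative identity
     (1 + ts)(1 + s) G' = (at(1 + s) + b(1 + ts)) G
   gives the three-term recurrence
     (n+2) f_{n+2} + (n+1)(1+t) f_{n+1} = (at + b) f_{n+1} + (a+b-n) t f_n.
   A common divisor d of f_c and f_{c-1} is prime to t, since f_c(0) = C(b,c)
   is nonzero mod p; the hypotheses make a+b-n invertible mod p for n <= c-2,
   so descending the recurrence d divides f_0 = 1. *)

From HB Require Import structures.
From mathcomp Require Import all_boot all_order all_algebra.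
From mathcomp Require Import zify ring.
Set Implicit Arguments.
Unset Strict Implicit.
Unset Printing Implicit Defensive.

Import GRing.Theory.
Local Open Scope ring_scope.

Lemma mul_deriv_exp (R : comNzRingType) (p : {poly R}) n :
  p * (p ^+ n)^`() = p^`() * p ^+ n *+ n.
Proof. by rewrite deriv_exp; case: n => [|n] //=; rewrite mulrnAr mulrCA -exprS. Qed.

Lemma coef_expr1ZX (R : comNzRingType) (v : R) n i :
  ((1 + v *: 'X) ^+ n)`_i = v ^+ i *+ 'C(n, i).
Proof.
rewrite exprDn coef_sum.
under eq_bigr do rewrite expr1n mul1r exprZn coefMn coefZ coefXn.
case: (ltnP n i) => [ltni | lein].
  rewrite bin_small // mulr0n big1 // => j _.
  by rewrite (gtn_eqF (leq_trans (ltn_ord j) ltni)) mulr0 mul0rn.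
rewrite (bigD1 (Ordinal (lein : (i < n.+1)%N))) //= eqxx mulr1 big1 ?addr0 // => j.
by rewrite -val_eqE /= eq_sym => /negbTE ->; rewrite mulr0 mul0rn.
Qed.

Section BinomialProduct.

Variables (R : comNzRingType) (u : R) (a b : nat).

Definition binom_prod : {poly R} := (1 + u *: 'X) ^+ a * (1 + 'X) ^+ b.

Lemma coef_binom_prod n :
  binom_prod`_n = \sum_(i < n.+1) u ^+ i *+ ('C(a, i) * 'C(b, n - i)).
Proof.
rewrite coefM; apply: eq_bigr => i _.
rewrite coef_expr1ZX -[X in (1 + X) ^+ b]scale1r coef_expr1ZX.
by rewrite expr1n mulr_natr mulrnA.
Qed.

Lemma deriv_binom_prod :
  (1 + u *: 'X) * (1 + 'X) * binom_prod^`() =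
  (a%:R * u%:P * (1 + 'X) + b%:R * (1 + u *: 'X)) * binom_prod.
Proof.
have dP := mul_deriv_exp (1 + u *: 'X) a.
have dQ := mul_deriv_exp (1 + 'X : {poly R}) b.
have d1 : (1 : {poly R})^`() = 0 by rewrite -polyC1 derivC.
rewrite !derivD derivZ derivX d1 !add0r alg_polyC in dP.
rewrite derivD derivX d1 add0r mul1r in dQ.
rewrite /binom_prod derivM.
set P := 1 + u *: 'X in dP *; set Q := 1 + 'X in dQ *.
transitivity ((1 + 'X) * (1 + 'X) ^+ b * (P * ((P ^+ a)^`()))
    + P * P ^+ a * (Q * (Q ^+ b)^`())); first by rewrite /Q; ring.
rewrite dP dQ /Q; ring.
Qed.

Lemma coef_binom_prod_rec n :
  binom_prod`_n.+2 *+ n.+2 + (1 + u) * binom_prod`_n.+1 *+ n.+1 =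
  (a%:R * u + b%:R) * binom_prod`_n.+1 + ((a + b)%:R - n%:R) * u * binom_prod`_n.
Proof.
have := congr1 (coefp n.+1) deriv_binom_prod.
set G := binom_prod; set D := G^`().
have -> : (1 + u *: 'X) * (1 + 'X) * D =
    D + 'X * ((1 + u)%:P * D) + 'X * ('X * (u%:P * D)).
  by rewrite -mul_polyC polyCD; ring.
have -> : (a%:R * u%:P * (1 + 'X) + b%:R * (1 + u *: 'X)) * G =
    (a%:R * u + b%:R)%:P * G + 'X * (((a + b)%:R * u)%:P * G).
  by rewrite -mul_polyC !polyCD !polyCM !polyC_natr; ring.
rewrite /= !coefD !coefXM !coefCM !coef_deriv /=.
have -> : (if n == 0%N then 0 else u * (G`_n.-1.+1 *+ n.-1.+1)) = u * (G`_n *+ n).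
  by case: n => [|n]; rewrite ?mulr0n ?mulr0.
move=> E; apply: (addIr (u * (G`_n *+ n))).
transitivity (G`_n.+2 *+ n.+2 + (1 + u) * (G`_n.+1 *+ n.+1) + u * (G`_n *+ n)).
  by ring.
by rewrite E; ring.
Qed.

End BinomialProduct.

Lemma fpoly_binom_prod (F : fieldType) a b n :
  fpoly F a b n = (binom_prod 'X a b)`_n.
Proof. by rewrite coef_binom_prod; apply: eq_bigr => i _; rewrite scaler_nat. Qed.

Lemma dvdp_fpoly_rec (F : fieldType) a b n (d : {poly F}) :
  coprimep d 'X -> (a + b)%:R - n%:R != 0 :> F ->
  d %| fpoly F a b n.+2 -> d %| fpoly F a b n.+1 -> d %| fpoly F a b n.
Proof.
move=> dX abn_neq0 d_f2 d_f1.
have rec := coef_binom_prod_rec (R := {poly F}) 'X a b n.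
rewrite -!fpoly_binom_prod in rec.
rewrite -(Gauss_dvdpr _ dX) -(dvdpZr _ _ abn_neq0).
move: rec; set f0 := fpoly F a b n; set f1 := fpoly F a b n.+1.
set f2 := fpoly F a b n.+2 => rec.
have -> : ((a + b)%:R - n%:R) *: ('X * f0) =
    f2 *+ n.+2 + (1 + 'X) * f1 *+ n.+1 - (a%:R * 'X + b%:R) * f1.
  by rewrite rec -mul_polyC polyCB !polyC_natr addrAC subrr add0r mulrA.
rewrite -[_ *+ n.+2]mulr_natr -[_ *+ n.+1]mulr_natr.
apply: dvdp_sub; last exact: dvdp_mull.
by apply: dvdp_add; apply: dvdp_mulr; last apply: dvdp_mull.
Qed.

Lemma fpoly0 (F : fieldType) a b : fpoly F a b 0 = 1.
Proof. by rewrite /fpoly big_ord1 !bin0 expr0 scale1r. Qed.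

Lemma horner0_fpoly (F : fieldType) a b n : (fpoly F a b n).[0] = 'C(b, n)%:R.
Proof.
rewrite /fpoly horner_sum big_ord_recl big1 => [|i _].
  by rewrite hornerZ hornerXn expr0 mulr1 bin0 mul1n subn0 addr0.
by rewrite hornerZ hornerXn expr0n mulr0.
Qed.

Lemma dvdp1_fpoly_common (F : fieldType) a b m (d : {poly F}) :
  coprimep d 'X -> (forall n, (n < m)%N -> (a + b)%:R - n%:R != 0 :> F) ->
  d %| fpoly F a b m.+1 -> d %| fpoly F a b m -> d %| 1.
Proof.
move=> dX; elim: m => [|m IHm] abn_neq0 d_f1 d_f0; first by rewrite -(fpoly0 F a b).
apply: (IHm _ d_f0); first by move=> n lt_nm; apply/abn_neq0/ltnW.
exact: dvdp_fpoly_rec dX (abn_neq0 _ (ltnSn m)) d_f1 d_f0.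
Qed.

Lemma prime_dvd_fact p n : prime p -> (p %| n`!)%N = (p <= n)%N.
Proof.
move=> p_pr; elim: n => [|n IHn].
  by have := prime_gt1 p_pr; rewrite fact0 dvdn1; lia.
rewrite factS Euclid_dvdM // IHn; case: (ltngtP p n.+1) => [lt_pn|lt_np|<-].
- by rewrite -ltnS lt_pn orbT.
- by rewrite gtnNdvd // leqNgt (ltnW lt_np).
- by rewrite dvdnn.
Qed.

Lemma prime_ndvd_bin p n k :
  prime p -> (n < p)%N -> (k <= n)%N -> ~~ (p %| 'C(n, k))%N.
Proof.
move=> p_pr lt_np le_kn; apply/negP => /(dvdn_mulr (k`! * (n - k)`!)).
by rewrite bin_fact // prime_dvd_fact // leqNgt lt_np.
Qed.

Theorem lemmaA5 (F : closedFieldType) (p : nat) (hp : prime p)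
  (hchar : p \in [pchar F]) (a b c : nat)
  (ha : (0 < a)%N) (hb : (0 < b)%N) (hc : (0 < c)%N)
  (hap : (a <= p - 1)%N) (hbp : (b <= p - 1)%N) (hcb : (c <= b)%N)
  (hcase : (a + b <= p - 1)%N \/ (c + p <= a + b + 1)%N) :
  coprimep (fpoly F a b c) (fpoly F a b (c - 1)).
Proof.
have p_gt1 := prime_gt1 hp.
have natr_neq0 k : ~~ (p %| k)%N -> k%:R != 0 :> F by rewrite (dvdn_pcharf hchar).
case: c hc hcb hcase => // c _ hcb hcase; rewrite subSS subn0.
apply/coprimepP => d d_fc1 d_fc.
have dX : coprimep d 'X.
  apply: coprimep_dvdr d_fc1 _.
  by rewrite coprimepX /root horner0_fpoly natr_neq0 // prime_ndvd_bin //; lia.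
apply: dvdp_eqp1 (dvdp1_fpoly_common dX _ d_fc1 d_fc) (eqpxx 1) => n lt_nc.
rewrite -natrB; last lia.
(* Either 0 < a + b - n < p, or p < a + b - n < 2p. *)
apply: natr_neq0.
have [lt_abn_p | lt_p_abn] : (a + b - n < p \/ p < a + b - n)%N by lia.
  by rewrite gtnNdvd //; lia.
rewrite (_ : a + b - n = p + (a + b - n - p))%N; last lia.
by rewrite dvdn_addr // gtnNdvd //; lia.
Qed.
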